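(* Let $(X,f)$ be a dynamical system. If $(X,f)$ is $\Delta$-transitive, then for every $r\in\mathbb{N}$ and every $\mathbf{a}\in\mathbb{N}^r_*$, the system $(X^r,f^{(\mathbf{a})})$ is also $\Delta$-transitive.
   Context: A dynamical system is a pair $(X,f)$ with $X$ a compact metric space and $f:X\to X$ continuous. $\mathbb{N}=\{1,2,\dots\}$; $\mathbb{N}^r_*=\{(n_1,\dots,n_r)\in\mathbb{N}^r: n_1<n_2<\dots<n_r\}$. For a system $(Y,g)$, a point $y$ is a transitive point if its $\omega$-limit set $\omega(y,g)$ equals $Y$. For $\mathbf{a}\in\mathbb{N}^r$, $f^{(\mathbf{a})}=f^{a_1}\times\dots\times f^{a_r}:X^r\to X^r$. $(X,f)$ is $\Delta$-$\mathbf{a}$-transitive if there is $x\in X$ such that $(x,\dots,x)$ is a transitive point of $(X^r,f^{(\mathbf{a})})$; $(X,f)$ is $\Delta$-transitive if it is $\Delta$-$(1,2,\dots,n)$-transitive for every $n\in\mathbb{N}$. (The same notions apply to the system $(X^r,f^{(\mathbf{a})})$ in place of $(X,f)$.) *)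

From Stdlib Require Import Reals List.
From mathcomp Require Import all_boot.
Set Implicit Arguments. Unset Strict Implicit. Unset Printing Implicit Defensive.

Local Open Scope R_scope.

Definition is_metric (X : Type) (d : X -> X -> R) : Prop :=
  (forall x y, 0 <= d x y) /\
  (forall x y, d x y = 0 <-> x = y) /\
  (forall x y, d x y = d y x) /\
  (forall x y z, d x z <= d x y + d y z).

Definition metric_open (X : Type) (d : X -> X -> R) (U : X -> Prop) : Prop :=
  forall x, U x -> exists eps, 0 < eps /\ forall y, d x y < eps -> U y.

Definition metric_compact (X : Type) (d : X -> X -> R) : Prop :=
  forall (I : Type) (U : I -> X -> Prop),
    (forall i, metric_open d (U i)) ->
    (forall x, exists i, U i x) ->
    exists l : list I, forall x, exists i, List.In i l /\ U i x.

Definition metric_continuous (X : Type) (d : X -> X -> R) (f : X -> X) : Prop :=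
  forall x eps, 0 < eps -> exists delta, 0 < delta /\
    forall y, d x y < delta -> d (f x) (f y) < eps.

Definition dynamical_system (X : Type) (d : X -> X -> R) (f : X -> X) : Prop :=
  is_metric d /\ metric_compact d /\ metric_continuous d f.

Definition omega_limit (Y : Type) (d : Y -> Y -> R) (g : Y -> Y) (y : Y)
  : Y -> Prop :=
  fun z => forall eps, 0 < eps -> forall N : nat,
    exists n : nat, (N <= n)%N /\ d (iter n g y) z < eps.

Definition transitive_point (Y : Type) (d : Y -> Y -> R) (g : Y -> Y) (y : Y)
  : Prop := forall z, omega_limit d g y z.

(* product X^n with the max metric (inducing the product topology) *)
Definition prod_dist (X : Type) (n : nat) (d : X -> X -> R)
  (x y : 'I_n -> X) : R := \big[Rmax/0]_(i < n) d (x i) (y i).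

Definition prod_map (X : Type) (n : nat) (a : 'I_n -> nat) (f : X -> X)
  (x : 'I_n -> X) : 'I_n -> X := fun i => iter (a i) f (x i).

Definition diag (X : Type) (n : nat) (x : X) : 'I_n -> X := fun _ => x.

Definition Delta_a_transitive (X : Type) (d : X -> X -> R) (f : X -> X)
  (n : nat) (a : 'I_n -> nat) : Prop :=
  exists x : X, transitive_point (prod_dist d) (prod_map a f) (@diag X n x).

Definition Delta_transitive (X : Type) (d : X -> X -> R) (f : X -> X) : Prop :=
  forall n : nat, (0 < n)%N ->
    Delta_a_transitive d f (fun i : 'I_n => (nat_of_ord i).+1).

From Stdlib Require Import Reals List Lra Classical ClassicalEpsilon.
From mathcomp Require Import all_boot zify.
Set Implicit Arguments. Unset Strict Implicit.
Local Open Scope R_scope.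

(* The argument is of Baire type, carried out
   with boxes (balls of the max metric) in X^r:
   - joint_approximation: Delta-transitivity of X for the tuple (1, ..., K),
     with K large, lets one orbit approximate at once a point y1 near any
     given y0 and the targets z_j,i reached from y1 (coordinates and targets
     are coded in disjoint blocks of times);
   - refine_to_hit_all: by continuity of finitely many iterates, compactness
     (a finite net) and successive refinement, every box contains a sub-box
     whose points all hit every configuration within 2 eta after time N;
   - common_point_of_refinable: compactness (Cauchy sequences converge) turns
     a nested sequence of such sub-boxes with radii -> 0 into a single point
     that hits every configuration with arbitrary precision. *)

Lemma inv_succ_small (eps : R) : 0 < eps ->
  exists S, forall s, (S <= s)%N -> / (INR s + 1) < eps.
Proof.
move=> eps_gt0; have [S HS] := INR_unbounded (/ eps).
exists S => s le_Ss.
have le_INR_Ss : INR S <= INR s by apply: le_INR; apply/leP.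
rewrite -(Rinv_inv eps); apply: Rinv_lt_contravar.
- by apply: Rmult_lt_0_compat; [apply: Rinv_0_lt_compat | have := pos_INR s; lra].
- lra.
Qed.

Lemma finite_common_radius (T : finType) (Q : T -> R -> Prop) :
  (forall k, exists delta, 0 < delta /\ Q k delta) ->
  (forall k delta delta', Q k delta -> 0 < delta' -> delta' <= delta -> Q k delta') ->
  exists delta, 0 < delta /\ forall k, Q k delta.
Proof.
move=> HQ Qmono.
suff [delta [delta_gt0 Hdelta]] :
    exists delta, 0 < delta /\ forall k, k \in enum T -> Q k delta.
  by exists delta; split => // k; apply: Hdelta; rewrite mem_enum.
elim: (enum T) => [|x s [delta [delta_gt0 Hdelta]]]; first by exists 1; split => //; lra.
have [dx [dx_gt0 Hdx]] := HQ x.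
have min_gt0 : 0 < Rmin delta dx by apply: Rmin_glb_lt.
exists (Rmin delta dx); split => // k; rewrite in_cons => /orP [/eqP ->|k_in].
- exact: Qmono Hdx min_gt0 (Rmin_r _ _).
- exact: Qmono (Hdelta _ k_in) min_gt0 (Rmin_l _ _).
Qed.

Section MetricFacts.
Variables (X : Type) (d : X -> X -> R).
Hypothesis d_metric : is_metric d.

Lemma dist_self (x : X) : d x x = 0.
Proof. by case: d_metric => _ [d_eq0 _]; apply/d_eq0. Qed.

Lemma dist_sym (x y : X) : d x y = d y x.
Proof. by case: d_metric => _ [_ [d_sym _]]. Qed.

Lemma dist_tri (x y z : X) : d x z <= d x y + d y z.
Proof. by case: d_metric => _ [_ [_ d_tri]]. Qed.

Definition cauchy_seq (u : nat -> X) : Prop :=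
  forall eps, 0 < eps -> exists S, forall s t, (S <= s)%N -> (S <= t)%N -> d (u s) (u t) < eps.

Definition converges_to (u : nat -> X) (L : X) : Prop :=
  forall eps, 0 < eps -> exists S, forall s, (S <= s)%N -> d (u s) L < eps.

Hypothesis d_compact : metric_compact d.

Lemma finite_net (x0 : X) (eta : R) : 0 < eta ->
  exists (k : nat) (p : 'I_k -> X) (near : X -> 'I_k),
    forall x, d (p (near x)) x < eta.
Proof.
move=> eta_gt0.
have balls_open c : metric_open d (fun y => d c y < eta).
  move=> y cy; exists (eta - d c y); split; first lra.
  by move=> w yw; have := dist_tri c y w; lra.
have balls_cover x : exists c, d c x < eta by exists x; rewrite dist_self.
have [l Hl] := d_compact balls_open balls_cover.
have list_index (c : X) (s : seq X) :
    List.In c s -> exists o, (o < size s)%N /\ nth x0 s o = c.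
  elim: s => [|c' s IH] //= [->|c_in]; first by exists 0%N.
  by have [o [o_lt <-]] := IH c_in; exists o.+1.
have Hnear x : exists o : 'I_(size l), d (nth x0 l o) x < eta.
  have [c [c_in cx]] := Hl x; have [o [o_lt c_eq]] := list_index c l c_in.
  by exists (Ordinal o_lt); rewrite /= c_eq.
exists (size l), (fun o => nth x0 l o).
exists (fun x => proj1_sig (constructive_indefinite_description _ (Hnear x))).
by move=> x; case: constructive_indefinite_description.
Qed.

Lemma cauchy_tail_away (u : nat -> X) (x : X) :
  cauchy_seq u -> ~ converges_to u x ->
  exists p : R * nat, 0 < p.1 /\ forall s, (p.2 <= s)%N -> p.1 <= d x (u s).
Proof.
move=> u_cauchy not_lim.
have [eps [eps_gt0 often_far]] :
    exists eps, 0 < eps /\ forall S, exists s, (S <= s)%N /\ eps <= d (u s) x.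
  apply: NNPP => H; apply: not_lim => eps eps_gt0; apply: NNPP => no_tail.
  apply: H; exists eps; split => // S; apply: NNPP => no_far; apply: no_tail.
  exists S => s le_Ss; apply: Rnot_le_lt => far_s; apply: no_far; by exists s.
have [S HS] := u_cauchy (eps / 2) ltac:(lra).
exists (eps / 2, S); split => /=; first lra.
move=> s le_Ss; have [s' [le_ss' far_s']] := often_far s.
have := HS s s' le_Ss (leq_trans le_Ss le_ss'); have := dist_tri (u s') (u s) x.
have := dist_sym (u s') (u s); rewrite (dist_sym x); lra.
Qed.

(* In a compact metric space every Cauchy sequence converges: otherwise the
   open sets avoided by tails of the sequence would cover the space, and a
   finite subcover would be avoided by a single tail. *)
Lemma cauchy_converges (u : nat -> X) : cauchy_seq u -> exists L, converges_to u L.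
Proof.
move=> u_cauchy; apply: NNPP => no_limit.
have away x := @cauchy_tail_away u x u_cauchy (fun lim => no_limit (ex_intro _ x lim)).
pose rho x := (proj1_sig (constructive_indefinite_description _ (away x))).1.
pose tail x := (proj1_sig (constructive_indefinite_description _ (away x))).2.
have Haway x : 0 < rho x /\ forall s, (tail x <= s)%N -> rho x <= d x (u s).
  by rewrite /rho /tail; case: constructive_indefinite_description.
have balls_open x : metric_open d (fun y => d x y < rho x).
  move=> y xy; exists (rho x - d x y); split; first lra.
  by move=> w yw; have := dist_tri x y w; lra.
have balls_cover y : exists x, d x y < rho x.
  by exists y; rewrite dist_self; apply: (proj1 (Haway y)).
have [l Hl] := d_compact balls_open balls_cover.
pose M := foldr (fun x m => maxn (tail x) m) 0%N l.
have tail_le_M x : List.In x l -> (tail x <= M)%N.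
  rewrite {}/M; elim: l {Hl} => [|x' l IH] //= [->|x_in]; first exact: leq_maxl.
  exact: leq_trans (IH x_in) (leq_maxr _ _).
have [x [x_in xuM]] := Hl (u M).
have := proj2 (Haway x) M (tail_le_M x x_in); lra.
Qed.

End MetricFacts.

Section Boxes.
Variables (X : Type) (d : X -> X -> R) (r : nat).

(* The open box of radius [rho] around [c] in [X^r], i.e. the ball of the
   max metric [prod_dist d]. *)
Definition box (c : 'I_r -> X) (rho : R) (y : 'I_r -> X) : Prop :=
  forall i, d (c i) (y i) < rho.

(* [(c', rho')] refines [(c, rho)] when even the box of twice the radius
   around [c'] lies inside the box around [c]; this slack keeps limits of
   nested refinements inside every box. *)
Definition refines (c : 'I_r -> X) (rho : R) (c' : 'I_r -> X) (rho' : R) : Prop :=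
  0 < rho' /\ forall y, box c' (2 * rho') y -> box c rho y.

Lemma refines_box c rho c' rho' y :
  refines c rho c' rho' -> box c' rho' y -> box c rho y.
Proof. by move=> [rho'_gt0 sub] Hy; apply: sub => i; have := Hy i; lra. Qed.

Lemma refines_trans c rho c' rho' c'' rho'' :
  refines c rho c' rho' -> refines c' rho' c'' rho'' -> refines c rho c'' rho''.
Proof.
move=> ref1 [rho''_gt0 sub2]; split => // y Hy.
exact: refines_box ref1 (sub2 y Hy).
Qed.

Lemma refines_shrink c rho c' rho' rho'' :
  refines c rho c' rho' -> 0 < rho'' -> rho'' <= rho' -> refines c rho c' rho''.
Proof.
move=> [_ sub] rho''_gt0 le_rho; split => // y Hy.
by apply: sub => i; have := Hy i; lra.
Qed.

Hypothesis d_metric : is_metric d.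

Lemma box_center c rho : 0 < rho -> box c rho c.
Proof. by move=> rho_gt0 i; rewrite (dist_self d_metric). Qed.

Hypothesis d_compact : metric_compact d.

Lemma nested_boxes_common_point (c : nat -> 'I_r -> X) (rho : nat -> R) :
  (forall s, refines (c s) (rho s) (c s.+1) (rho s.+1)) ->
  (forall eps, 0 < eps -> exists S, forall s, (S <= s)%N -> rho s < eps) ->
  exists y, forall s, box (c s) (rho s) y.
Proof.
move=> ref_step rho_small.
have nested s k y : box (c (k + s)%N) (rho (k + s)%N) y -> box (c s) (rho s) y.
  by elim: k y => [|k IH] y // Hy; apply: IH; exact: refines_box (ref_step _) Hy.
have centers_close s t i : (s <= t.+1)%N -> d (c s i) (c t.+1 i) < rho s.
  move=> le_st; apply: (nested s (t.+1 - s)%N); rewrite subnK //.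
  exact: box_center (proj1 (ref_step t)).
have centers_cauchy i : cauchy_seq d (fun s => c s i).
  move=> eps eps_gt0; have [S HS] := rho_small eps eps_gt0.
  exists S.+1 => [[|s] [|t]] // le_Ss le_St.
  have [le_st|lt_ts] := leqP s t.
  - exact: Rlt_trans (centers_close s.+1 t i le_st) (HS _ (ltnW le_Ss)).
  - rewrite (dist_sym d_metric).
    exact: Rlt_trans (centers_close t.+1 s i (leqW lt_ts)) (HS _ (ltnW le_St)).
have lim i := cauchy_converges d_metric d_compact (centers_cauchy i).
pose y i := proj1_sig (constructive_indefinite_description _ (lim i)).
have Hy i : converges_to d (fun s => c s i) (y i).
  by rewrite /y; case: constructive_indefinite_description.
exists y => s; apply: (proj2 (ref_step s)) => i.
have [T HT] := Hy i (rho s.+1) (proj1 (ref_step s)).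
have := HT (maxn T s).+1 (leqW (leq_maxl _ _)).
have := centers_close s.+1 (maxn T s) i (leq_maxr _ _).
have := dist_tri d_metric (c s.+1 i) (c (maxn T s).+1 i) (y i); lra.
Qed.

Lemma common_point_of_refinable (G : nat -> ('I_r -> X) -> Prop) (y0 : 'I_r -> X) :
  (forall s c rho, 0 < rho -> exists c' rho', refines c rho c' rho' /\
     rho' <= / (INR s + 1) /\ forall y, box c' rho' y -> G s y) ->
  exists y, forall s, G s y.
Proof.
move=> refinable.
pose good_refinement s (p q : ('I_r -> X) * R) :=
  refines p.1 p.2 q.1 q.2 /\ q.2 <= / (INR s + 1) /\ forall y, box q.1 q.2 y -> G s y.
have step s p : exists q, 0 < p.2 -> good_refinement s p q.
  have [p_gt0|p_le0] := Rlt_dec 0 p.2; last by exists p => p_gt0; case: p_le0.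
  by have [c' [rho' H]] := refinable s p.1 p.2 p_gt0; exists (c', rho').
pose next s p := proj1_sig (constructive_indefinite_description _ (step s p)).
have Hnext s p : 0 < p.2 -> good_refinement s p (next s p).
  by rewrite /next; case: constructive_indefinite_description.
pose fix boxes s := if s is s'.+1 then next s' (boxes s') else (y0, 1).
have boxes_pos s : 0 < (boxes s).2.
  by elim: s => [|s IH] /=; [lra | exact: proj1 (proj1 (Hnext s _ IH))].
have [y Hy] : exists y, forall s, box (boxes s).1 (boxes s).2 y.
  apply: nested_boxes_common_point => [s|eps eps_gt0].
    exact: proj1 (Hnext s _ (boxes_pos s)).
  have [S HS] := inv_succ_small eps_gt0; exists S.+1 => -[|s] // le_Ss.
  exact: Rle_lt_trans (proj1 (proj2 (Hnext s _ (boxes_pos s)))) (HS s le_Ss).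
by exists y => s; apply: (proj2 (proj2 (Hnext s _ (boxes_pos s)))); apply: Hy s.+1.
Qed.

End Boxes.

Lemma prod_dist_lt (X : Type) (d : X -> X -> R) (n : nat) (x y : 'I_n -> X) (eps : R) :
  0 < eps -> (forall i, d (x i) (y i) < eps) -> prod_dist d x y < eps.
Proof.
move=> eps_gt0 Hxy; rewrite /prod_dist.
by apply: (big_ind (fun v => v < eps)) => // u v; apply: Rmax_lub_lt.
Qed.

Lemma prod_dist_ge (X : Type) (d : X -> X -> R) (n : nat) (x y : 'I_n -> X) (i : 'I_n) :
  d (x i) (y i) <= prod_dist d x y.
Proof.
rewrite /prod_dist; have : i \in index_enum 'I_n by rewrite mem_index_enum.
elim: (index_enum _) => [|j s IH] //; rewrite in_cons big_cons => /orP [/eqP <-|i_in].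
- exact: Rmax_l.
- exact: Rle_trans (IH i_in) (Rmax_r _ _).
Qed.

Lemma iter_prod_map (X : Type) (n : nat) (b : 'I_n -> nat) (g : X -> X) m v k :
  iter m (prod_map b g) v k = iter (b k * m) g (v k).
Proof.
elim: m => [|m IH]; first by rewrite muln0.
by rewrite iterS /prod_map IH mulnS iterD.
Qed.

Lemma iter_continuous (X : Type) (d : X -> X -> R) (f : X -> X) (k : nat) :
  metric_continuous d f -> metric_continuous d (iter k f).
Proof.
move=> f_cont; elim: k => [|k IH] x eps eps_gt0; first by exists eps.
have [delta1 [delta1_gt0 H1]] := f_cont (iter k f x) eps eps_gt0.
have [delta2 [delta2_gt0 H2]] := IH x delta1 delta1_gt0.
by exists delta2; split => // y xy; rewrite !iterS; apply/H1/H2.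
Qed.

Lemma iterates_stable (X : Type) (d : X -> X -> R) (f : X -> X) (r n : nat)
    (e : 'I_n -> 'I_r -> nat) (c : 'I_r -> X) (eta : R) :
  metric_continuous d f -> 0 < eta ->
  exists rho, 0 < rho /\ forall y, box d c rho y ->
    forall j i, d (iter (e j i) f (c i)) (iter (e j i) f (y i)) < eta.
Proof.
move=> f_cont eta_gt0.
pose stable (p : 'I_n * 'I_r) rho := forall y', d (c p.2) y' < rho ->
  d (iter (e p.1 p.2) f (c p.2)) (iter (e p.1 p.2) f y') < eta.
have [rho [rho_gt0 Hrho]] : exists rho, 0 < rho /\ forall p, stable p rho.
  apply: finite_common_radius => [p|p rho1 rho2 H1 _ le_rho y' Hy'].
    exact: iter_continuous f_cont (c p.2) eta eta_gt0.
  by apply: H1; lra.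
by exists rho; split => // y Hy j i; apply: (Hrho (j, i)).
Qed.

Section DeltaTransitiveProduct.
Variables (X : Type) (d : X -> X -> R) (f : X -> X).
Hypothesis f_dtrans : Delta_transitive d f.
Variables (r' n' : nat) (a : 'I_r'.+1 -> nat).
Hypothesis a_pos : forall i, (0 < a i)%N.

(* Time [e t] is devoted to coordinate [i] when
   [e = (i+1) C + k] with [k < C], where [C > (n'+1) max_i a_i]: [k = 0]
   encodes [y0 i] and [k = (j+1) a_i] encodes [z j i]. *)
Lemma joint_approximation (y0 : 'I_r'.+1 -> X) (z : 'I_n'.+1 -> 'I_r'.+1 -> X)
    (delta : R) (N : nat) :
  0 < delta -> exists (y1 : 'I_r'.+1 -> X) (t : nat), (N <= t)%N /\
    (forall i, d (y1 i) (y0 i) < delta) /\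
    forall (j : 'I_n'.+1) i, d (iter (a i * (j.+1 * t)) f (y1 i)) (z j i) < delta.
Proof.
move=> delta_gt0.
pose C := (n'.+1 * \max_(i < r'.+1) a i).+1.
pose K := (r'.+2 * C)%N.
pose block (e : nat) : 'I_r'.+1 := inord (e %/ C).-1.
pose code (e : nat) : X := if (e %% C == 0)%N then y0 (block e)
  else z (inord ((e %% C) %/ a (block e)).-1) (block e).
have [x Hx] := @f_dtrans K isT.
have [t [le_Nt Ht]] := Hx (fun k : 'I_K => code k.+1) delta delta_gt0 N.
have orbit_close e : (0 < e)%N -> (e <= K)%N -> d (iter (e * t) f x) (code e) < delta.
  move=> e_gt0 le_eK; have lt_eK : (e.-1 < K)%N by rewrite prednK.
  apply: Rle_lt_trans Ht.
  have := prod_dist_ge d (iter t (prod_map (fun k : 'I_K => k.+1) f) (diag x))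
    (fun k : 'I_K => code k.+1) (Ordinal lt_eK).
  by rewrite iter_prod_map /= prednK.
have decode (i : 'I_r'.+1) k : (k < C)%N ->
    block (i.+1 * C + k)%N = i /\ ((i.+1 * C + k) %% C = k)%N.
  move=> lt_kC; rewrite /block modnMDl modn_small // divnMDl // divn_small //.
  by rewrite addn0 /= inord_val.
have lt_iK (i : 'I_r'.+1) k : (k < C)%N -> (i.+1 * C + k <= K)%N.
  by move=> lt_kC; have := ltn_ord i; rewrite /K; nia.
exists (fun i => iter (i.+1 * C * t) f x), t; split => //; split.
- move=> i; have [block_i mod_i] := decode i 0%N isT.
  have := orbit_close (i.+1 * C + 0)%N isT (lt_iK i 0%N isT).
  by rewrite /code block_i mod_i eqxx addn0.
- move=> j i.
  have lt_jaC : (j.+1 * a i < C)%N.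
    by rewrite ltnS leq_mul ?(ltn_ord j) ?(@leq_bigmax _ a i).
  have [block_i mod_i] := decode i _ lt_jaC.
  have := orbit_close (i.+1 * C + j.+1 * a i)%N
    ltac:(by rewrite addn_gt0 muln_gt0) (lt_iK i _ lt_jaC).
  rewrite /code block_i mod_i muln_eq0 /= eqn0Ngt a_pos /= mulnK // inord_val.
  by rewrite -iterD; congr (d (iter _ f x) _ < _); lia.
Qed.

Hypotheses (d_metric : is_metric d) (d_compact : metric_compact d)
  (f_cont : metric_continuous d f).

Definition hits (y : 'I_r'.+1 -> X) (z : 'I_n'.+1 -> 'I_r'.+1 -> X) (eta : R)
    (N : nat) : Prop :=
  exists m, (N <= m)%N /\
    forall (j : 'I_n'.+1) i, d (iter (a i * (j.+1 * m)) f (y i)) (z j i) < eta.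

(* Every box has a sub-box all of whose points hit a given configuration:
   center it at the point given by [joint_approximation] and make it small
   enough for the finitely many relevant iterates to be stable. *)
Lemma refine_to_hit (c : 'I_r'.+1 -> X) (rho : R) (z : 'I_n'.+1 -> 'I_r'.+1 -> X)
    (eta : R) (N : nat) :
  0 < rho -> 0 < eta ->
  exists c' rho', refines d c rho c' rho' /\ forall y, box d c' rho' y -> hits y z eta N.
Proof.
move=> rho_gt0 eta_gt0.
have delta_gt0 : 0 < Rmin (rho / 4) (eta / 2) by apply: Rmin_glb_lt; lra.
have [c' [t [le_Nt [c'_near c'_hits]]]] := joint_approximation c z N delta_gt0.
have half_eta_gt0 : 0 < eta / 2 by lra.
have [rc [rc_gt0 stable]] :=
  @iterates_stable X d f r'.+1 n'.+1 (fun j i => a i * (j.+1 * t))%N c' _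
    f_cont half_eta_gt0.
have rho'_gt0 : 0 < Rmin rc (rho / 4) by apply: Rmin_glb_lt; lra.
have := Rmin_l (rho / 4) (eta / 2); have := Rmin_r (rho / 4) (eta / 2).
have := Rmin_l rc (rho / 4); have := Rmin_r rc (rho / 4).
move=> rho'_le4 rho'_lerc delta_le2 delta_le4.
exists c', (Rmin rc (rho / 4)); split; first split => // y Hy i.
  have := Hy i; have := c'_near i; have := dist_tri d_metric (c i) (c' i) (y i).
  rewrite (dist_sym d_metric (c i) (c' i)); lra.
move=> y Hy; exists t; split => // j i.
have := stable y (fun i => Rlt_le_trans _ _ _ (Hy i) rho'_lerc) j i.
have := c'_hits j i; have := dist_tri d_metric
  (iter (a i * (j.+1 * t)) f (y i)) (iter (a i * (j.+1 * t)) f (c' i)) (z j i).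
rewrite (dist_sym d_metric (iter _ f (y i)) (iter _ f (c' i))); lra.
Qed.

Lemma refine_to_hit_finite (T : finType) (zs : T -> 'I_n'.+1 -> 'I_r'.+1 -> X)
    (c : 'I_r'.+1 -> X) (rho eta : R) (N : nat) :
  0 < rho -> 0 < eta ->
  exists c' rho', refines d c rho c' rho' /\
    forall y, box d c' rho' y -> forall k, hits y (zs k) eta N.
Proof.
move=> rho_gt0 eta_gt0.
suff [c' [rho' [ref Hc']]] : exists c' rho', refines d c rho c' rho' /\
    forall y, box d c' rho' y -> forall k, k \in enum T -> hits y (zs k) eta N.
  by exists c', rho'; split => // y Hy k; apply: Hc' => //; rewrite mem_enum.
elim: (enum T) c rho rho_gt0 => [|k ks IH] c rho rho_gt0.
  exists c, (rho / 2); split => //; split; first lra.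
  by move=> y Hy i; have := Hy i; lra.
have [c1 [rho1 [ref1 hit1]]] := refine_to_hit c (zs k) N rho_gt0 eta_gt0.
have [c2 [rho2 [ref2 hit2]]] := IH c1 rho1 (proj1 ref1).
exists c2, rho2; split; first exact: refines_trans ref1 ref2.
move=> y Hy k'; rewrite in_cons => /orP [/eqP -> | k'_in].
- exact: hit1 (refines_box ref2 Hy).
- exact: hit2.
Qed.

(* With a finite [eta]-net [p] of [X], the configurations with values in [p]
   are finitely many, so one sub-box hits every configuration within [2 eta]. *)
Lemma refine_to_hit_all (c : 'I_r'.+1 -> X) (rho eta : R) (N : nat) :
  0 < rho -> 0 < eta ->
  exists c' rho', refines d c rho c' rho' /\
    forall y, box d c' rho' y -> forall z, hits y z (2 * eta) N.
Proof.
move=> rho_gt0 eta_gt0.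
have [k [p [near Hnear]]] := finite_net d_metric d_compact (c ord0) eta_gt0.
pose grid (g : {ffun 'I_n'.+1 -> {ffun 'I_r'.+1 -> 'I_k}}) j i := p (g j i).
have [c' [rho' [ref Hc']]] := refine_to_hit_finite grid c N rho_gt0 eta_gt0.
exists c', rho'; split => // y Hy z.
have [m [le_Nm Hm]] := Hc' y Hy [ffun j => [ffun i => near (z j i)]].
exists m; split => // j i; have := Hm j i; rewrite /grid !ffunE => close_grid.
have := Hnear (z j i); have := dist_tri d_metric
  (iter (a i * (j.+1 * m)) f (y i)) (p (near (z j i))) (z j i); lra.
Qed.

Lemma product_Delta_a_transitive :
  Delta_a_transitive (prod_dist d) (prod_map a f) (fun j : 'I_n'.+1 => j.+1).
Proof.
have [x _] := @f_dtrans 1%N isT.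
pose G s (y : 'I_r'.+1 -> X) := forall z, hits y z (2 * / (INR s + 1)) s.
have [y Hy] : exists y, forall s, G s y.
  apply: (common_point_of_refinable d_metric d_compact (fun _ => x)).
  move=> s c rho rho_gt0.
  have inv_gt0 : 0 < / (INR s + 1) by apply: Rinv_0_lt_compat; have := pos_INR s; lra.
  have [c' [rho' [ref Hc']]] := refine_to_hit_all c s rho_gt0 inv_gt0.
  have min_gt0 : 0 < Rmin rho' (/ (INR s + 1)).
    by apply: Rmin_glb_lt => //; exact: proj1 ref.
  exists c', (Rmin rho' (/ (INR s + 1))); split.
    exact: refines_shrink ref min_gt0 (Rmin_l _ _).
  split; first exact: Rmin_r.
  move=> y' Hy'; apply: Hc' => i; have := Hy' i.
  have := Rmin_l rho' (/ (INR s + 1)); lra.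
exists y => z eps eps_gt0 N.
have [S HS] := @inv_succ_small (eps / 2) ltac:(lra).
have [m [le_m Hm]] := Hy (maxn S N) z.
exists m; split; first exact: leq_trans (leq_maxr S N) le_m.
apply: prod_dist_lt => // j; rewrite iter_prod_map.
apply: prod_dist_lt => // i; rewrite iter_prod_map /diag.
have := Hm j i; have := HS _ (leq_maxl S N); lra.
Qed.

End DeltaTransitiveProduct.

(* Proposition 5.3. *)
Theorem proposition5p3 (X : Type) (d : X -> X -> R) (f : X -> X) :
  dynamical_system d f ->
  Delta_transitive d f ->
  forall (r : nat), (0 < r)%N ->
  forall (a : 'I_r -> nat),
    (forall i, (0 < a i)%N) ->
    (forall i j : 'I_r, (i < j)%N -> (a i < a j)%N) ->
    Delta_transitive (prod_dist d) (prod_map a f).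
Proof.
move=> [d_metric [d_compact f_cont]] f_dtrans [|r'] // _ a a_pos _ [|n'] // _.
exact: product_Delta_a_transitive.
Qed.
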